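(* Let $(X,\mathcal{A},\mu)$ be a probability space and let $\{E_i\}_{i\in\mathbb{N}}$ be a sequence of sets in $\mathcal{A}$. Suppose that $$\sum_{i=1}^\infty \mu(E_i)=\infty,$$ and that there exists a constant $C>0$ such that $$\sum_{s,t=1}^Q \mu(E_s\cap E_t)\le C\Big(\sum_{s=1}^Q\mu(E_s)\Big)^2\quad\text{for infinitely many }Q\in\mathbb{N}.$$ Suppose in addition that condition (M1) holds. Then $\mu(E_\infty)=1$.
   Context: $E_\infty:=\limsup_{i\to\infty}E_i=\bigcap_{t=1}^\infty\bigcup_{i=t}^\infty E_i$. Condition (M1): for every $\delta>0$ and all natural numbers $q_1<q_2$ there exists $i_0=i_0(q_1,q_2,\delta)$ such that for all $i\ge i_0$, $$\mu(A\cap E_i)\le(1+\delta)\mu(A)\mu(E_i),\qquad\text{where } A=\bigcup_{j=q_1}^{q_2}E_j.$$ *)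

From HB Require Import structures.
From mathcomp Require Import all_boot all_order all_algebra.
From mathcomp Require Import all_classical all_reals all_analysis.

From HB Require Import structures.
From mathcomp Require Import all_boot all_order all_algebra.
From mathcomp Require Import all_classical all_reals all_analysis.
From mathcomp Require Import measurable_realfun ring lra.
Import Order.TTheory GRing.Theory Num.Theory numFieldNormedType.Exports.
Local Open Scope classical_set_scope.
Local Open Scope ring_scope.

(** If the tail union [tail q = \bigcup_(j >= q) E j] had measure [a < 1],
    approximate it from inside by a finite block [A = E q \/ ... \/ E q2] up
    to [c = g^2 / (4 C)], where [g = (1 - a) / 2].  By (M1) the sets
    [E i `\` A] keep a fraction [g] of the mass of [E i] for all large [i], so
    their measures still diverge and they are still quasi-independent.  The
    Chung-Erdos inequality
    [(\sum_i mu B_i)^2 <= mu (\bigcup_i B_i) * \sum_(s,t) mu (B_s `&` B_t)]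
    then gives [mu (\bigcup_(i1 <= i < Q) E i `\` A) >= c] for suitable [Q],
    although this union lies in [tail q `\` A], of measure [< c].  Hence every
    tail union is full and so is their decreasing limit [lim_sup_set E]. *)

Section chung_erdos_inequality.
Context {d : measure_display} {T : measurableType d} {R : realType}
  (mu : {measure set T -> \bar R}).
Local Open Scope ereal_scope.

Lemma measurable_sum_indic (I : finType) (B : I -> set T) :
  (forall i, measurable (B i)) ->
  measurable_fun [set: T] (fun x => \sum_i (\1_(B i) x : R)%:E : \bar R).
Proof.
move=> mB; apply: emeasurable_sum => i.
by apply/measurable_EFinP; exact: measurable_indic.
Qed.

Lemma integral_sum_indic (I : finType) (B : I -> set T) :
  (forall i, measurable (B i)) ->
  \int[mu]_x (\sum_i (\1_(B i) x : R)%:E) = \sum_i mu (B i).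
Proof.
move=> mB; rewrite ge0_integral_sum//.
- by apply: eq_bigr => i _; rewrite integral_indic// setIT.
- by move=> i; apply/measurable_EFinP; exact: measurable_indic.
Qed.

Lemma sum_indicI_sqr (I : finType) (B : I -> set T) (x : T) :
  (\sum_(p : I * I) \1_(B p.1 `&` B p.2) x = (\sum_i \1_(B i) x) ^+ 2 :> R)%R.
Proof.
rewrite -(pair_bigA _ (fun s t => \1_(B s `&` B t) x)) expr2 big_distrl /=.
apply: eq_bigr => s _.
by rewrite big_distrr /=; apply: eq_bigr => t _; rewrite indicI.
Qed.

Lemma chung_erdos_linear (I : finType) (B : I -> set T) (l : R) :
  (forall i, measurable (B i)) -> (0 <= l)%R ->
  (2 * l)%:E * \sum_i mu (B i) <=
    (l ^+ 2)%:E * \sum_s \sum_t mu (B s `&` B t) + mu (\bigcup_i B i).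
Proof.
move=> mB l0; set U := \bigcup_i B i.
have mU : measurable U by exact: fin_bigcup_measurable finite_finset _.
have mBB : forall p : I * I, measurable (B p.1 `&` B p.2).
  by move=> p; exact: measurableI.
have mIU : measurable_fun [set: T] (fun x => (\1_U x : R)%:E).
  by apply/measurable_EFinP; exact: measurable_indic.
have mS := @measurable_sum_indic _ _ mB.
have mSS := @measurable_sum_indic _ _ mBB.
have sum_indic_ge0 (J : finType) (F : J -> set T) x :
    0 <= \sum_j (\1_(F j) x : R)%:E.
  by apply: sume_ge0 => j _; rewrite lee_fin.
rewrite -integral_sum_indic// pair_bigA /= -(@integral_sum_indic _ _ mBB).
have -> : mu U = \int[mu]_x (\1_U x : R)%:E by rewrite integral_indic// setIT.
rewrite -!ge0_integralZl// ?lee_fin ?exprn_ge0 ?mulr_ge0//.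
rewrite -ge0_integralD//; last 2 first.
- by move=> x _; apply: mule_ge0; rewrite ?lee_fin ?exprn_ge0.
- exact: measurable_funeM.
apply: ge0_le_integral => //.
- by move=> x _; apply: mule_ge0; rewrite ?lee_fin ?mulr_ge0.
- exact: measurable_funeM.
- by apply: emeasurable_funD => //; exact: measurable_funeM.
(* pointwise, with [k] the number of [B i] containing [x]:
   [2 l k <= (l k)^2 + 1] if [k > 0], and both sides vanish if [k = 0] *)
move=> x _; rewrite !sumEFin -!EFinM -EFinD lee_fin sum_indicI_sqr.
set k := (\sum_i \1_(B i) x)%R.
have [Ux|nUx] := pselect (U x).
- rewrite indicE mem_set//=; have := sqr_ge0 (l * k - 1)%R; nra.
have -> : k = 0%R.
  by rewrite /k big1// => i _; rewrite indicE memNset// => Bx; apply: nUx; exists i.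
by rewrite mulr0 expr0n /= mulr0 add0r indicE memNset.
Qed.

End chung_erdos_inequality.

Section probability_real.
Context {d : measure_display} {T : measurableType d} {R : realType}
  (mu : probability T R).

Definition pr (A : set T) : R := fine (mu A).

Lemma prE A : measurable A -> mu A = (pr A)%:E.
Proof. by move=> mA; rewrite /pr fineK// fin_num_measure. Qed.

Lemma pr_ge0 A : 0 <= pr A.
Proof. exact/fine_ge0/measure_ge0. Qed.

Lemma pr_le A B : measurable A -> measurable B -> A `<=` B -> pr A <= pr B.
Proof.
move=> mA mB AB; rewrite -lee_fin -!prE//.
by apply: le_measure => //; rewrite inE.
Qed.

Lemma pr_le1 A : measurable A -> pr A <= 1.
Proof. by move=> mA; rewrite -lee_fin -prE// probability_le1. Qed.

Lemma pr_setD A B : measurable A -> measurable B ->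
  pr (A `\` B) = pr A - pr (A `&` B).
Proof.
move=> mA mB; apply: EFin_inj.
rewrite EFinB -!prE//; last exact: measurableD; last exact: measurableI.
by rewrite measureD// (le_lt_trans (probability_le1 mu mA) (ltry 1)).
Qed.

Lemma sum_prE (I : finType) (B : I -> set T) : (forall i, measurable (B i)) ->
  (\sum_i mu (B i))%E = (\sum_i pr (B i))%:E.
Proof. by move=> mB; rewrite -sumEFin; apply: eq_bigr => i _; exact: prE. Qed.

Lemma sum2_prE (I : finType) (B : I -> set T) : (forall i, measurable (B i)) ->
  (\sum_s \sum_t mu (B s `&` B t))%E = (\sum_s \sum_t pr (B s `&` B t))%:E.
Proof.
move=> mB; rewrite -sumEFin; apply: eq_bigr => s _.
by apply: sum_prE => t; exact: measurableI.
Qed.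

Lemma pr_setD_ge A B (delta : R) : measurable A -> measurable B ->
  pr (A `&` B) <= (1 + delta) * pr A * pr B ->
  (1 - (1 + delta) * pr A) * pr B <= pr (B `\` A).
Proof. by move=> mA mB AB; rewrite pr_setD// setIC mulrBl mul1r lerD2l lerN2. Qed.

Theorem chung_erdos (I : finType) (B : I -> set T) :
  (forall i, measurable (B i)) ->
  (\sum_i pr (B i)) ^+ 2 <= pr (\bigcup_i B i) * \sum_s \sum_t pr (B s `&` B t).
Proof.
move=> mB.
have mBB s t : measurable (B s `&` B t) by exact: measurableI.
have mU : measurable (\bigcup_i B i) by exact: fin_bigcup_measurable finite_finset _.
set X := \sum_i pr (B i); set Y := \sum_s _; set P := pr _.
have lin l : 0 <= l -> 2 * l * X <= l ^+ 2 * Y + P.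
  move=> l0; have := chung_erdos_linear mu _ _ l mB l0.
  by rewrite [X in (_ + X)%E]prE// sum_prE// sum2_prE// -!EFinM -EFinD lee_fin.
have X_ge0 : 0 <= X by apply: sumr_ge0 => i _; exact: pr_ge0.
have Y_ge0 : 0 <= Y by do 2 (apply: sumr_ge0 => ? _); exact: pr_ge0.
have P_ge0 : 0 <= P by exact: pr_ge0.
have [->|X_neq0] := eqVneq X 0; first by rewrite expr0n mulr_ge0.
have [Y_eq0|Y_neq0] := eqVneq Y 0.
  have hl : 2 * ((P + 1) / (2 * X)) * X = P + 1 by field.
  have := lin _ (divr_ge0 (addr_ge0 P_ge0 ler01) (mulr_ge0 (ler0n _ 2) X_ge0)).
  by rewrite Y_eq0 hl; lra.
have Y_gt0 : 0 < Y by rewrite lt_def Y_neq0.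
have := lin (X / Y) (divr_ge0 X_ge0 Y_ge0).
have : X / Y * Y = X by rewrite divfK.
set l := X / Y; nra.
Qed.

Lemma pr_bigcup_ge (I : finType) (B : I -> set T) (x y : R) :
  (forall i, measurable (B i)) -> 0 <= x -> 0 < y ->
  x <= \sum_i pr (B i) -> \sum_s \sum_t pr (B s `&` B t) <= y ->
  x ^+ 2 / y <= pr (\bigcup_i B i).
Proof.
move=> mB x_ge0 y_gt0 hx hy; rewrite ler_pdivrMr//.
apply: (@le_trans _ _ ((\sum_i pr (B i)) ^+ 2)); first by rewrite !expr2 ler_pM.
apply: (le_trans (chung_erdos _ _ mB)); apply: ler_wpM2l hy; exact: pr_ge0.
Qed.

End probability_real.

Section tail_unions.
Context {d : measure_display} {T : measurableType d} {R : realType}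
  (mu : probability T R) (E : nat -> set T).
Hypothesis mE : forall i, measurable (E i).

Definition psum (n : nat) : R := \sum_(0 <= i < n) pr mu (E i).

Definition tail (q : nat) : set T := \bigcup_(j in [set j | (q <= j)%N]) E j.

Definition block (q1 q2 : nat) : set T :=
  \bigcup_(j in [set j : nat | (q1 <= j <= q2)%N]) E j.

Lemma measurable_tail q : measurable (tail q).
Proof. exact: bigcup_measurable. Qed.

Lemma measurable_block q1 q2 : measurable (block q1 q2).
Proof. exact: bigcup_measurable. Qed.

Lemma block_sub_tail q1 q2 : block q1 q2 `<=` tail q1.
Proof. by move=> x [j /= /andP[qj _] Ej]; exists j. Qed.

Lemma psum_ge0 n : 0 <= psum n.
Proof. by apply: sumr_ge0 => i _; exact: pr_ge0. Qed.

Lemma psum_le m n : (m <= n)%N -> psum m <= psum n.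
Proof.
move=> mn; rewrite /psum [leRHS](big_cat_nat (leq0n m) mn) /= lerDl.
by apply: sumr_ge0 => i _; exact: pr_ge0.
Qed.

Lemma psumE n : (\sum_(i < n) mu (E i))%E = (psum n)%:E.
Proof. by rewrite sum_prE// /psum big_mkord. Qed.

Lemma block_approx_tail q e : 0 < e ->
  exists q2, (q < q2)%N /\ pr mu (tail q) - e < pr mu (block q q2).
Proof.
move=> e0.
have tailE : \bigcup_n block q n = tail q.
  apply/seteqP; split=> [x [n _] /block_sub_tail//|x [j /= qj Ej]].
  by exists j => //; exists j => //=; rewrite qj leqnn.
have cvg_mu_block : (mu \o block q) @ \oo --> mu (tail q).
  rewrite -tailE; apply: nondecreasing_cvg_mu.
  - exact: measurable_block.
  - by rewrite tailE; exact: measurable_tail.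
  - move=> m n mn; apply/subsetPset => x [j /= /andP[qj jm] Ej].
    by exists j => //=; rewrite qj (leq_trans jm).
have /fine_cvgP[_ cvg_block] : (mu \o block q) @ \oo --> (pr mu (tail q))%:E.
  by rewrite -prE//; exact: measurable_tail.
have [N _ HN] : \forall n \near \oo, pr mu (tail q) - e < pr mu (block q n).
  by apply: (cvgr_gt _ cvg_block); rewrite gtrBl.
exists (maxn N q.+1); split; first by rewrite leq_max leqnn orbT.
by apply: HN; rewrite /= leq_max leqnn.
Qed.

Definition residual (A : set T) (i1 i : nat) : set T :=
  if (i1 <= i)%N then E i `\` A else set0.

Lemma measurable_residual A i1 i : measurable A -> measurable (residual A i1 i).
Proof. by move=> mA; rewrite /residual; case: ifP => _ //; exact: measurableD. Qed.

Lemma residual_sub A i1 i : residual A i1 i `<=` E i.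
Proof. by rewrite /residual; case: ifP => _ // x []. Qed.

Lemma bigcup_residual_sub A q i1 Q : (q <= i1)%N ->
  \bigcup_(i : 'I_Q) residual A i1 i `<=` tail q `\` A.
Proof.
move=> qi1 x [i _]; rewrite /residual; case: ifP => // i1i [Ex nAx]; split => //.
by exists i => //=; exact: leq_trans i1i.
Qed.

Lemma sum_residual_ge A i1 Q (g : R) : measurable A -> (i1 <= Q)%N ->
  (forall i, (i1 <= i)%N -> g * pr mu (E i) <= pr mu (E i `\` A)) ->
  g * (psum Q - psum i1) <= \sum_(i < Q) pr mu (residual A i1 i).
Proof.
move=> mA i1Q gE.
rewrite -(big_mkord xpredT (fun i => pr mu (residual A i1 i))).
rewrite (big_cat_nat (leq0n i1) i1Q) /= big_nat_cond big1 ?add0r; last first.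
  by move=> i /andP[/andP[_ ii1]]; rewrite /residual leqNgt ii1 /pr measure0.
rewrite /psum (big_cat_nat (leq0n i1) i1Q) /= addrC addrK mulr_sumr.
by apply: ler_sum_nat => i /andP[i1i _]; rewrite /residual i1i; exact: gE.
Qed.

Hypothesis sum_mu_E_divergent : (\sum_(0 <= i <oo) mu (E i) = +oo)%E.

Lemma psum_unbounded (M : R) : exists N, M <= psum N.
Proof.
have : (fun n => \sum_(0 <= i < n) mu (E i)) @ \oo --> +oo%E.
  by rewrite -sum_mu_E_divergent; apply: is_cvg_nneseries.
move=> /cvgey_gt/(_ M)[N _ HN]; exists N.
by have := HN N (leqnn N); rewrite /= big_mkord psumE lte_fin => /ltW.
Qed.

Variable C : R.
Hypothesis C_gt0 : 0 < C.
Hypothesis quasi_independent : forall N : nat, exists Q : nat, (N <= Q)%N /\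
  (\sum_(s < Q) \sum_(t < Q) mu (E s `&` E t)
     <= C%:E * ((\sum_(s < Q) mu (E s)) * (\sum_(s < Q) mu (E s))))%E.

Lemma quasi_independent_pr N : exists Q, (N <= Q)%N /\
  \sum_(s < Q) \sum_(t < Q) pr mu (E s `&` E t) <= C * psum Q ^+ 2.
Proof.
have [Q [NQ HQ]] := quasi_independent N; exists Q; split => //.
by move: HQ; rewrite sum2_prE// psumE -!EFinM lee_fin expr2.
Qed.

Lemma quasi_independent_large i1 : exists Q, [/\ (i1 <= Q)%N,
  2 * psum i1 + 1 <= psum Q &
  \sum_(s < Q) \sum_(t < Q) pr mu (E s `&` E t) <= C * psum Q ^+ 2].
Proof.
have [N hN] := psum_unbounded (2 * psum i1 + 1).
have [Q [NQ hQ]] := quasi_independent_pr (maxn N i1).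
exists Q; split => //; first by apply: leq_trans NQ; rewrite leq_max leqnn orbT.
by apply: (le_trans hN); apply: psum_le; apply: leq_trans NQ; rewrite leq_max leqnn.
Qed.

Hypothesis M1 : forall delta : R, 0 < delta -> forall q1 q2 : nat, (q1 < q2)%N ->
  exists i0 : nat, forall i : nat, (i0 <= i)%N ->
    let A := \bigcup_(j in [set j : nat | (q1 <= j <= q2)%N]) E j in
    (mu (A `&` E i) <= (1 + delta)%:E * mu A * mu (E i))%E.

Lemma pr_setD_block_ge (g : R) q1 q2 : 0 < g -> (q1 < q2)%N ->
  pr mu (block q1 q2) <= 1 - 2 * g ->
  exists i0, forall i, (i0 <= i)%N -> g * pr mu (E i) <= pr mu (E i `\` block q1 q2).
Proof.
move=> g_gt0 q12 hA; have [i0 Hi0] := M1 _ g_gt0 _ _ q12; exists i0 => i i0i.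
have mA := measurable_block q1 q2.
have mAE : measurable (block q1 q2 `&` E i) by exact: measurableI.
apply: le_trans (pr_setD_ge mu _ _ g mA (mE i) _).
  apply: ler_wpM2r; first exact: pr_ge0.
  have := pr_ge0 mu (block q1 q2); nra.
have := Hi0 i i0i; rewrite /= -/(block q1 q2).
by rewrite (prE _ _ mAE) (prE _ _ mA) (prE _ _ (mE i)) -!EFinM lee_fin.
Qed.

Lemma pr_bigcup_residual_le q q2 i1 Q : (q <= i1)%N ->
  pr mu (\bigcup_(i : 'I_Q) residual (block q q2) i1 i)
    <= pr mu (tail q) - pr mu (block q q2).
Proof.
move=> qi1; have mA := measurable_block q q2; have mT := measurable_tail q.
rewrite -[X in _ - pr mu X](setIidr (block_sub_tail q q2)) -pr_setD//.
apply: pr_le; [|exact: measurableD|exact: bigcup_residual_sub].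
by apply: fin_bigcup_measurable finite_finset _ => i _; exact: measurable_residual.
Qed.

Lemma pr_tail q : pr mu (tail q) = 1.
Proof.
have mT := measurable_tail q.
set a := pr mu (tail q).
apply/eqP; rewrite eq_le pr_le1 //= leNgt; apply/negP => a_lt1.
have a_ge0 : 0 <= a by exact: pr_ge0.
pose g := (1 - a) / 2.
have g_gt0 : 0 < g by rewrite /g; lra.
pose c := g ^+ 2 / (4 * C).
have c_gt0 : 0 < c by rewrite /c divr_gt0 ?exprn_gt0 // mulr_gt0.
have [q2 [qq2 hA]] := block_approx_tail q c c_gt0.
set A := block q q2 in hA; rewrite -/a in hA.
have mA : measurable A by exact: measurable_block.
have Aa : pr mu A <= a by apply: pr_le => //; exact: block_sub_tail.
have A_le : pr mu A <= 1 - 2 * g by rewrite /g; lra.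
have [i0 hi0] := pr_setD_block_ge g q q2 g_gt0 qq2 A_le.
pose i1 := maxn i0 q.
have [Q [i1Q SQ hQ]] := quasi_independent_large i1.
pose B := residual A i1.
have mB i : measurable (B i) by exact: measurable_residual.
have hX : g * psum Q / 2 <= \sum_(i < Q) pr mu (B i).
  have gE i : (i1 <= i)%N -> g * pr mu (E i) <= pr mu (E i `\` A).
    by move=> i1i; apply: hi0; apply: leq_trans i1i; rewrite leq_max leqnn.
  have := sum_residual_ge _ _ _ g mA i1Q gE; have := psum_ge0 i1; nra.
have hY : \sum_(s < Q) \sum_(t < Q) pr mu (B s `&` B t) <= C * psum Q ^+ 2.
  apply: le_trans hQ; apply: ler_sum => s _; apply: ler_sum => t _.
  apply: pr_le; [exact: measurableI|exact: measurableI|].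
  exact: setISS (residual_sub _ _ _) (residual_sub _ _ _).
have hP : pr mu (\bigcup_(i : 'I_Q) B i) < c.
  have qi1 : (q <= i1)%N by rewrite leq_max leqnn orbT.
  by apply: le_lt_trans (pr_bigcup_residual_le _ q2 _ Q qi1) _; rewrite -/a; lra.
have S_gt0 : 0 < psum Q by have := psum_ge0 i1; lra.
suff : c <= pr mu (\bigcup_(i : 'I_Q) B i) by rewrite leNgt hP.
have -> : c = (g * psum Q / 2) ^+ 2 / (C * psum Q ^+ 2).
  by rewrite /c; field; rewrite !gt_eqF.
apply: pr_bigcup_ge => //; first by rewrite divr_ge0 // mulr_ge0 // ltW.
by rewrite mulr_gt0 // exprn_gt0.
Qed.

End tail_unions.

Theorem theorem1 (d : measure_display) (T : measurableType d) (R : realType)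
  (mu : probability T R) (E : nat -> set T)
  (mE : forall i, measurable (E i))
  (hdiv : (\sum_(0 <= i <oo) mu (E i) = +oo)%E)
  (hqi : exists C : R, 0 < C /\
     forall N : nat, exists Q : nat, (N <= Q)%N /\
       (\sum_(s < Q) \sum_(t < Q) mu (E s `&` E t)
          <= C%:E * ((\sum_(s < Q) mu (E s)) * (\sum_(s < Q) mu (E s))))%E)
  (hM1 : forall delta : R, 0 < delta -> forall q1 q2 : nat, (q1 < q2)%N ->
     exists i0 : nat, forall i : nat, (i0 <= i)%N ->
       let A := \bigcup_(j in [set j : nat | (q1 <= j <= q2)%N]) E j in
       (mu (A `&` E i) <= (1 + delta)%:E * mu A * mu (E i))%E) :
  mu (lim_sup_set E) = 1%E.
Proof.
have [C [C_gt0 hQ]] := hqi.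
have mT := measurable_tail E mE.
have tail_one : (fun n => mu (tail E n)) = cst 1%E.
  by apply: funext => n; rewrite (prE _ _ (mT n)) (pr_tail _ _ mE hdiv _ C_gt0 hQ hM1).
have := lim_sup_set_cvg mu E mE (le_lt_trans (probability_le1 mu (mT 0)) (ltry 1)).
by rewrite tail_one => /cvg_lim <-//; exact: lim_cst.
Qed.
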